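(* Let $\mathcal{Q}=\left(\frac{\lambda,\ \mu}{F}\right)$ be a generalized quaternion algebra and $\mathbf{a}=a_1i+a_2j+a_3k$, $\mathbf{b}=b_1i+b_2j+b_3k$ pure quaternions. Then $\mathbf{a},\mathbf{b},\mathbf{a}\times\mathbf{b}$ are linearly dependent over $F$ if and only if $N(\mathbf{a})N(\mathbf{b})=(\mathbf{a}\cdot\mathbf{b})^2$. This is equivalent to $N(\mathbf{a}\times\mathbf{b})=0$, i.e. to $-\mu(a_2b_3-a_3b_2)^2-\lambda(a_1b_3-a_3b_1)^2+(a_1b_2-a_2b_1)^2=0$; that is, $\mathbf{a}\times\mathbf{b}$ is isotropic or zero.
   Context: $F$ is a field of characteristic $\neq2$, $\lambda,\mu\in F$ nonzero; $\mathcal{Q}$ has $F$-basis $1,i,j,k$ with $i^2=\lambda$, $j^2=\mu$, $ij=-ji=k$. Norm: $N(x_0+x_1i+x_2j+x_3k)=x_0^2-\lambda x_1^2-\mu x_2^2+\lambda\mu x_3^2$. For pure $\mathbf{a},\mathbf{b}$: $\mathbf{a}\cdot\mathbf{b}=-\lambda a_1b_1-\mu a_2b_2+\lambda\mu a_3b_3$ and $\mathbf{a}\times\mathbf{b}=-\mu(a_2b_3-a_3b_2)\,i+\lambda(a_1b_3-a_3b_1)\,j+(a_1b_2-a_2b_1)\,k$. A nonzero element $X$ is isotropic if $N(X)=0$. *)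

From HB Require Import structures.
From mathcomp Require Import all_boot all_algebra.
Set Implicit Arguments. Unset Strict Implicit. Unset Printing Implicit Defensive.
Import GRing.Theory.
Local Open Scope ring_scope.

(* Elements of the generalized quaternion algebra (lambda, mu / F), written in
   the F-basis 1, i, j, k:  x0 + x1 i + x2 j + x3 k. *)
Record quat (F : fieldType) := Quat { q0 : F; q1 : F; q2 : F; q3 : F }.

Definition pure (F : fieldType) (a1 a2 a3 : F) : quat F := Quat 0 a1 a2 a3.

Definition qnorm (F : fieldType) (lam mu : F) (x : quat F) : F :=
  q0 x ^+ 2 - lam * q1 x ^+ 2 - mu * q2 x ^+ 2 + lam * mu * q3 x ^+ 2.

Definition qdot (F : fieldType) (lam mu : F) (a b : quat F) : F :=
  - lam * q1 a * q1 b - mu * q2 a * q2 b + lam * mu * q3 a * q3 b.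

Definition qcross (F : fieldType) (lam mu : F) (a b : quat F) : quat F :=
  pure (- mu * (q2 a * q3 b - q3 a * q2 b))
       (lam * (q1 a * q3 b - q3 a * q1 b))
       (q1 a * q2 b - q2 a * q1 b).

Definition qzero (F : fieldType) : quat F := Quat 0 0 0 0.

Definition qadd (F : fieldType) (x y : quat F) : quat F :=
  Quat (q0 x + q0 y) (q1 x + q1 y) (q2 x + q2 y) (q3 x + q3 y).

Definition qscale (F : fieldType) (c : F) (x : quat F) : quat F :=
  Quat (c * q0 x) (c * q1 x) (c * q2 x) (c * q3 x).

Definition lin_dep3 (F : fieldType) (u v w : quat F) : Prop :=
  exists x y z : F, ~ (x = 0 /\ y = 0 /\ z = 0) /\
    qadd (qadd (qscale x u) (qscale y v)) (qscale z w) = qzero F.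

Definition isotropic (F : fieldType) (lam mu : F) (X : quat F) : Prop :=
  X <> qzero F /\ qnorm lam mu X = 0.

(* The system x a + y b + z (a × b) = 0 has a nontrivial solution iff
   det(a, b, a × b) = -mu m1^2 - lam m2^2 + m3^2 vanishes, the m_i being the
   2 x 2 minors of (a, b).  The norm of a × b is lam mu times the same form, and
   the Lagrange identity N(a) N(b) = (a . b)^2 + N(a × b) ties it to the norms.
   As lam mu != 0 all conditions are equivalent. *)

From mathcomp Require Import all_boot all_algebra ring.
From Stdlib Require Import Classical.
Set Implicit Arguments. Unset Strict Implicit. Unset Printing Implicit Defensive.
Import GRing.Theory.
Local Open Scope ring_scope.

Section PureQuaternions.
Variable F : fieldType.
Implicit Types (x y z : F) (u v w : quat F).

Definition row3 x y z : 'rV[F]_3 := \row_k [:: x; y; z]`_k.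

Definition qvec u : 'rV[F]_3 := row3 (q1 u) (q2 u) (q3 u).

Definition qmx3 u v w : 'M[F]_3 := \matrix_i [:: qvec u; qvec v; qvec w]`_i.

Definition cross_form (lam mu : F) u v : F :=
  - mu * (q2 u * q3 v - q3 u * q2 v) ^+ 2 - lam * (q1 u * q3 v - q3 u * q1 v) ^+ 2
  + (q1 u * q2 v - q2 u * q1 v) ^+ 2.

Lemma row3E (r : 'rV[F]_3) : r = row3 (r 0 0) (r 0 1) (r 0 2).
Proof.
by apply/rowP => -[[|[|[|//]]] k3]; rewrite mxE; congr (r 0 _); apply: val_inj.
Qed.

Lemma row3_eq0 x y z : row3 x y z = 0 <-> x = 0 /\ y = 0 /\ z = 0.
Proof.
split=> [/rowP r0 | [-> [-> ->]]].
  by move: (r0 0) (r0 1) (r0 2); rewrite !mxE.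
by apply/rowP => -[[|[|[|//]]] k3]; rewrite !mxE.
Qed.

Lemma qvec_eq0 u : q0 u = 0 -> qvec u = 0 <-> u = qzero F.
Proof.
case: u => u0 u1 u2 u3 /= ->; rewrite /qvec row3_eq0 /=.
by split=> [[-> [-> ->]] | [-> -> ->]].
Qed.

Lemma row3_mul_qmx3 x y z u v w :
  row3 x y z *m qmx3 u v w = qvec (qadd (qadd (qscale x u) (qscale y v)) (qscale z w)).
Proof.
apply/rowP => j; rewrite !mxE !big_ord_recl big_ord0 !mxE /=.
by case: j => [[|[|[|//]]] j3]; rewrite /= ?mxE /=; ring.
Qed.

Lemma lin_dep3_pureE u v w : q0 u = 0 -> q0 v = 0 -> q0 w = 0 ->
  lin_dep3 u v w <-> \det (qmx3 u v w) = 0.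
Proof.
move=> u0 v0 w0; split.
- move=> [x [y [z [xyz_nz comb0]]]]; apply/eqP/det0P; exists (row3 x y z).
    by apply/eqP; rewrite row3_eq0.
  by rewrite row3_mul_qmx3 comb0; apply/qvec_eq0.
- move=> /eqP/det0P[r]; rewrite [r]row3E => r_nz rM0.
  exists (r 0 0), (r 0 1), (r 0 2); split; first by rewrite -row3_eq0; apply/eqP.
  by apply/qvec_eq0; [rewrite /= u0 v0 w0; ring | rewrite -row3_mul_qmx3].
Qed.

Lemma det_qmx3 u v w : \det (qmx3 u v w) =
  q1 u * (q2 v * q3 w - q3 v * q2 w) - q2 u * (q1 v * q3 w - q3 v * q1 w)
  + q3 u * (q1 v * q2 w - q2 v * q1 w).
Proof.
rewrite (expand_det_row _ 0) !big_ord_recl big_ord0 /cofactor.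
rewrite !(expand_det_row _ 0) !big_ord_recl !big_ord0 /cofactor !det_mx11 !mxE.
by rewrite /bump /=; ring.
Qed.

Lemma det_qmx3_qcross (lam mu : F) u v :
  \det (qmx3 u v (qcross lam mu u v)) = cross_form lam mu u v.
Proof. by rewrite det_qmx3 /cross_form /=; ring. Qed.

Lemma qnorm_qcross (lam mu : F) u v :
  qnorm lam mu (qcross lam mu u v) = lam * mu * cross_form lam mu u v.
Proof. by rewrite /qnorm /cross_form /=; ring. Qed.

Lemma qnormM_pure (lam mu : F) u v : q0 u = 0 -> q0 v = 0 ->
  qnorm lam mu u * qnorm lam mu v
  = qdot lam mu u v ^+ 2 + qnorm lam mu (qcross lam mu u v).
Proof.
by case: u v => [u0 u1 u2 u3] [v0 v1 v2 v3] /= -> ->; rewrite /qnorm /qdot /=; ring.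
Qed.

Lemma qnorm_eq0 (lam mu : F) u :
  qnorm lam mu u = 0 <-> isotropic lam mu u \/ u = qzero F.
Proof.
split=> [u_null | [[_ ->] | ->] //]; last by rewrite /qnorm /=; ring.
by have [->|u_nz] := classic (u = qzero F); [right | left].
Qed.

End PureQuaternions.

Theorem lemma3p5 (F : fieldType) (hchar : (2%:R : F) != 0)
    (lam mu : F) (hlam : lam != 0) (hmu : mu != 0)
    (a1 a2 a3 b1 b2 b3 : F) :
  let a := pure a1 a2 a3 in
  let b := pure b1 b2 b3 in
  (lin_dep3 a b (qcross lam mu a b) <->
     qnorm lam mu a * qnorm lam mu b = (qdot lam mu a b) ^+ 2)
  /\ (qnorm lam mu a * qnorm lam mu b = (qdot lam mu a b) ^+ 2 <->
     qnorm lam mu (qcross lam mu a b) = 0)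
  /\ (qnorm lam mu (qcross lam mu a b) = 0 <->
     - mu * (a2 * b3 - a3 * b2) ^+ 2 - lam * (a1 * b3 - a3 * b1) ^+ 2
       + (a1 * b2 - a2 * b1) ^+ 2 = 0)
  /\ (qnorm lam mu (qcross lam mu a b) = 0 <->
     isotropic lam mu (qcross lam mu a b) \/ qcross lam mu a b = qzero F).
Proof.
move=> a b.
have norm_cross0 : qnorm lam mu (qcross lam mu a b) = 0 <-> cross_form lam mu a b = 0.
  rewrite qnorm_qcross; split=> [/eqP | ->]; last by rewrite mulr0.
  by rewrite !mulf_eq0 (negPf hlam) (negPf hmu) => /eqP.
have lagrange0 : qnorm lam mu a * qnorm lam mu b = qdot lam mu a b ^+ 2 <->
                 qnorm lam mu (qcross lam mu a b) = 0.
  rewrite qnormM_pure // -{2}(addr0 (qdot lam mu a b ^+ 2)).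
  by split=> [/addrI | ->].
split; first by rewrite lin_dep3_pureE // det_qmx3_qcross -norm_cross0 lagrange0.
by split; [|split]; [exact: lagrange0 | exact: norm_cross0 | exact: qnorm_eq0].
Qed.
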